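(* Let $A\in\mathbb{R}^{n\times d}$ have rows $a_1^\top,\dots,a_n^\top$, let $f_1,\dots,f_n:\mathbb{R}\to\mathbb{R}$ be convex and $(1/\gamma)$-smooth ($\gamma>0$), let $g:\mathbb{R}^d\to\mathbb{R}\cup\{+\infty\}$ be closed and $\mu$-strongly convex ($\mu>0$), and write $f^*(y)=\frac1n\sum_{i=1}^nf_i^*(y_i)$ for $y\in\mathbb{R}^n$. For the iterates of the SDAPD method (described in the context), for every $t\ge0$ and every $y\in\mathbb{R}^n$, $$\frac{1}{2\tau}\mathbb{E}_{\mathcal{F}_t}\Big[\Big(1+\frac{(n-1)\gamma\tau}{n}\Big)\|y^t-y\|_2^2-(1+\gamma\tau)\|y^{t+1}-y\|_2^2-\|y^{t+1}-y^t\|_2^2\Big]\ge\mathbb{E}_{\mathcal{F}_t}\Big[-\frac1n\langle\bar{y}^{t+1}-y,A\bar{x}^{t+1}\rangle+nf^*(y^{t+1})-(n-1)f^*(y^t)-f^*(y)\Big].$$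
   Context: $f_i^*$ is the convex conjugate of $f_i$; $\operatorname{prox}_h(u)=\arg\min_v\{h(v)+\frac12\|v-u\|_2^2\}$. SDAPD method: given $x^0\in\mathbb{R}^d$, $y^0\in\mathbb{R}^n$, $\eta,\tau>0$, $\beta_t>0$, set $B_t=\sum_{k=0}^t\beta_k$. For $t=0,1,\dots$: sample $i_t$ uniformly from $\{1,\dots,n\}$ independently of the past; $\bar{x}^{t+1}=\operatorname{prox}_{\eta g}(x^t-\frac{\eta}{n}A^\top y^t)$; $y^{t+1}_i=\operatorname{prox}_{\tau f_i^*}(y_i^t+\tau\langle a_i,\bar{x}^{t+1}\rangle)$ if $i=i_t$, $y^{t+1}_i=y^t_i$ otherwise; $\bar{y}^{t+1}=y^t+n(y^{t+1}-y^t)$; $x^{t+1}=\operatorname{prox}_{B_tg}(x^0-\sum_{k=0}^t\frac{\beta_k}{n}A^\top\bar{y}^{k+1})$. $\mathcal{F}_t$ is the $\sigma$-field generated by all random variables up to iteration $t$ (so $x^t,y^t,\bar x^{t+1}$ are determined given $\mathcal{F}_t$ and $i_t$ is independent of $\mathcal{F}_t$), and $\mathbb{E}_{\mathcal{F}_t}$ is conditional expectation given $\mathcal{F}_t$.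
   Formalization: The starting point y⁰ is assumed to satisfy fᵢ*(y⁰ᵢ) < +∞ for every i, so y⁰ lies in the domain of f*. The statement above fails without it. *)

From HB Require Import structures.
From mathcomp Require Import all_boot all_order all_algebra.
From mathcomp Require Import boolp classical_sets reals ereal topology normedtype derive.
Set Implicit Arguments. Unset Strict Implicit. Unset Printing Implicit Defensive.
Import Order.TTheory GRing.Theory Num.Theory.
Import numFieldNormedType.Exports.
Local Open Scope ring_scope.

Section SDAPD.
Variable R : realType.

Definition dotv {m : nat} (u v : 'cV[R]_m) : R := \sum_(i < m) u i 0 * v i 0.
Definition sqn {m : nat} (u : 'cV[R]_m) : R := dotv u u.

Definition convex_fun (h : R -> R) : Prop :=
  forall x y l : R, 0 <= l <= 1 -> h (l * x + (1 - l) * y) <= l * h x + (1 - l) * h y.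

Definition smooth_with (L : R) (h : R -> R) : Prop :=
  (forall x, derivable h x 1) /\
  (forall x y, `|derive1 h x - derive1 h y| <= L * `|x - y|).

Definition conjR (h : R -> R) (s : R) : \bar R :=
  ereal_sup [set ((s * x - h x)%:E) | x in [set: R]].

(* proximal operators: prox_h(u) = argmin_v { h v + 1/2 |v - u|^2 }
   (chosen via classical choice; the minimizer exists and is unique
   for the functions used below) *)
Definition proxR (h : R -> \bar R) (u : R) : R :=
  xget u [set v | forall w : R,
    (h v + ((v - u) ^+ 2 / 2)%:E <= h w + ((w - u) ^+ 2 / 2)%:E)%E].

Definition proxV {m : nat} (h : 'cV[R]_m -> \bar R) (u : 'cV[R]_m) : 'cV[R]_m :=
  xget u [set v | forall w : 'cV[R]_m,
    (h v + (sqn (v - u) / 2)%:E <= h w + (sqn (w - u) / 2)%:E)%E].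

Definition fstar {n : nat} (f : 'I_n -> R -> R) (y : 'cV[R]_n) : \bar R :=
  ((n%:R)^-1%:E * \sum_(i < n) conjR (f i) (y i ord0))%E.

Variables (n d : nat) (A : 'M[R]_(n, d)) (f : 'I_n -> R -> R)
  (g : 'cV[R]_d -> \bar R) (eta tau : R) (beta : nat -> R)
  (x0 : 'cV[R]_d) (y0 : 'cV[R]_n).

Definition Bsum (t : nat) : R := \sum_(k < t.+1) beta k.

Definition xbar_of (x : 'cV[R]_d) (y : 'cV[R]_n) : 'cV[R]_d :=
  proxV (fun v => (eta%:E * g v)%E) (x - (eta / n%:R) *: (A^T *m y)).

(* state of SDAPD at time t: (x^t, y^t, S_t) where
   S_t = sum_{k<t} beta_k/n A^T ybar^{k+1} *)
Definition sdapd_step (t : nat) (st : 'cV[R]_d * 'cV[R]_n * 'cV[R]_d)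
    (i : 'I_n) : 'cV[R]_d * 'cV[R]_n * 'cV[R]_d :=
  let: (x, y, Sk) := st in
  let xb := xbar_of x y in
  let yi := proxR (fun v => (tau%:E * conjR (f i) v)%E)
                  (y i 0 + tau * (row i A *m xb) 0 0) in
  let y' := \col_j (if j == i then yi else y j 0) in
  let yb := y + n%:R *: (y' - y) in
  let S' := Sk + (beta t / n%:R) *: (A^T *m yb) in
  let x' := proxV (fun v => ((Bsum t)%:E * g v)%E) (x0 - S') in
  (x', y', S').

(* iterates as functions of the sequence of sampled indices s = (i_0, i_1, ...) *)
Fixpoint sdapd_state (s : nat -> 'I_n) (t : nat) : 'cV[R]_d * 'cV[R]_n * 'cV[R]_d :=
  match t with
  | 0 => (x0, y0, 0)
  | t'.+1 => sdapd_step t' (sdapd_state s t') (s t')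
  end.

Definition x_it s t := (sdapd_state s t).1.1.
Definition y_it s t := (sdapd_state s t).1.2.
Definition xbar_it s t := xbar_of (x_it s t) (y_it s t).   (* = xbar^{t+1} *)
Definition ybar_it s t := y_it s t + n%:R *: (y_it s t.+1 - y_it s t). (* = ybar^{t+1} *)

End SDAPD.

(* Probability model: horizon T; sample space Omega = {ffun 'I_T.+1 -> 'I_n}
   with the uniform probability, i.e. i_0,...,i_T i.i.d. uniform on 'I_n.
   F_t = sigma(i_0, ..., i_{t-1}); its atoms are the fibers below, so the
   conditional expectation given F_t is the average over the fiber. *)
Section Prob.
Variable R : realType.
Variables n T : nat.

Definition Omega := {ffun 'I_T.+1 -> 'I_n}.

Definition idx_seq (w : Omega) : nat -> 'I_n := fun k => w (inord k).

Definition fiber (t : nat) (w : Omega) : {set Omega} :=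
  [set w' : Omega | [forall k : 'I_T.+1, (k < t)%N ==> (w' k == w k)]].

Definition condE (t : nat) (Z : Omega -> R) (w : Omega) : R :=
  (\sum_(w' in fiber t w) Z w') / #|fiber t w|%:R.

Definition condEe (t : nat) (Z : Omega -> \bar R) (w : Omega) : \bar R :=
  ((#|fiber t w|%:R)^-1%:E * \sum_(w' in fiber t w) Z w')%E.

End Prob.

(* The per-step inequality is deterministic once the sampled coordinate i is fixed: the
   prox step on coordinate i satisfies a three-point inequality with modulus 1 + gamma tau,
   because f_i^* is gamma-strongly convex when f_i is (1/gamma)-smooth.  Conditionally on
   F_t the coordinate i_t is uniform, so the conditional expectations are averages over i;
   averaging the n three-point inequalities and expanding y^{t+1}, ybar^{t+1} and f^*(y^{t+1})
   coordinatewise gives the claim.  If f^*(y) = +oo the left-hand side is -oo. *)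

From HB Require Import structures.
From mathcomp Require Import all_boot all_order all_algebra.
From mathcomp Require Import boolp classical_sets reals ereal topology normedtype derive.
From mathcomp Require Import ring lra functions.
Import Order.TTheory GRing.Theory Num.Theory.
Import numFieldNormedType.Exports.
Local Open Scope ring_scope.
Local Open Scope classical_set_scope.

Section SmoothConvex.
Context {R : realType}.
Implicit Types (h : R -> R) (s u x y z : R).

Lemma convex_tangent_le h x y : convex_fun h -> (forall x, derivable h x 1) ->
  h x + derive1 h x * (y - x) <= h y.
Proof.
move=> cvx dh; have dhx : differentiable h x by exact/derivable1_diffP.
have Dh : 'D_(y - x) h x = derive1 h x * (y - x).
  rewrite deriveE // derive1E' // -{1}[y - x]mulr1 -[(y - x) * 1]/((y - x) *: 1).
  by rewrite linearZ /= mulrC.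
rewrite -Dh addrC -lerBrDr.
have cvg_quot : (fun k => k^-1 *: ((h \o shift x) (k *: (y - x)) - h x)) @ 0^'+ -->
    'D_(y - x) h x.
  have dh_yx : derivable h x (y - x) by exact: diff_derivable.
  move=> P HP; have := dh_yx P HP.
  rewrite /at_right /dnbhs /within /= !nbhs_simpl /=.
  by apply: filterS => k Hk k0; apply: Hk; rewrite gt_eqF.
apply: (cvgr_to_le cvg_quot); near=> k.
have k0 : 0 < k by near: k; exact: nbhs_right_gt.
have k1 : k < 1 by near: k; exact: nbhs_right_lt.
rewrite /= -ler_pdivlMl ?invr_gt0 // invrK [_ *: _]/(_ * _).
have hk : h (k * (y - x) + x) <= k * h y + (1 - k) * h x.
  by rewrite (_ : k * (y - x) + x = k * y + (1 - k) * x); [apply: cvx; rewrite !ltW | ring].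
rewrite lerBlDr (le_trans hk) // mulrBr; lra.
Unshelve. all: by end_near.
Qed.

Lemma smooth_descent h L x y : smooth_with L h ->
  h y <= h x + derive1 h x * (y - x) + L / 2 * (y - x) ^+ 2.
Proof.
move=> [dh Lh].
pose psi := h - derive1 h x \*: id - (L / 2) \*: ((id - cst x) * (id - cst x)).
have psiE z : psi z = h z - derive1 h x * z - L / 2 * ((z - x) * (z - x)) by [].
have Dpsi (c : R) : is_derive c (1 : R) psi (derive1 h c - derive1 h x - L / 2 * (2 * (c - x))).
  have : is_derive c 1 h (derive1 h c) by rewrite derive1E; apply: derivableP.
  move=> ?; apply: is_derive_eq; rewrite /=; congr (_ - _ - _).
    by rewrite /GRing.scale /= mulr1.
  change (L / 2 * ((c - x) * (1 - 0) + (c - x) * (1 - 0)) = L / 2 * (2 * (c - x))); ring.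
have psi_cont a b : {within `[a, b], continuous psi}.
  apply: derivable_within_continuous => z _; exact: (@ex_derive _ _ _ _ _ _ _ (Dpsi z)).
suff : psi y <= psi x by rewrite !psiE; lra.
have [xy|yx] := leP x y.
  have [c /[!in_itv] /andP[xc cy] E] := MVT_segment xy (fun z _ => Dpsi z) (psi_cont x y).
  rewrite -subr_le0 E mulr_le0_ge0 ?subr_ge0 //.
  have := Lh c x; rewrite (ger0_norm (_ : 0 <= c - x)) ?subr_ge0 //.
  have := ler_norm (derive1 h c - derive1 h x); lra.
have [c /[!in_itv] /andP[yc cx] E] := MVT_segment (ltW yx) (fun z _ => Dpsi z) (psi_cont y x).
rewrite -subr_ge0 E mulr_ge0 ?subr_ge0 ?(ltW yx) //.
have := Lh c x; rewrite (ler0_norm (_ : c - x <= 0)) ?subr_le0 //.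
have := ler_norm (- (derive1 h c - derive1 h x)); rewrite normrN; lra.
Qed.

Lemma smooth_derive1_continuous h L : 0 < L -> smooth_with L h -> continuous (derive1 h).
Proof.
move=> L0 [_ Lh] x; apply/cvgrPdist_lt => e e0; near=> z.
apply: le_lt_trans (Lh x z) _; rewrite -ltr_pdivlMl //; near: z.
by apply: (@cvgr_dist_lt _ R^o _ (nbhs x)); [exact: cvg_id | rewrite mulr_gt0 ?invr_gt0].
Unshelve. all: by end_near.
Qed.

Lemma convex_derive1_nondecreasing h x y : convex_fun h -> (forall x, derivable h x 1) ->
  x <= y -> derive1 h x <= derive1 h y.
Proof.
move=> cvx dh; rewrite le_eqVlt => /orP[/eqP->//|xy].
have := convex_tangent_le h x y cvx dh; have := convex_tangent_le h y x cvx dh; nra.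
Qed.

Lemma conjR_ge h s x : ((s * x - h x)%:E <= conjR h s)%E.
Proof. by apply: ereal_sup_ubound; exists x. Qed.

Lemma conjR_gtNy h s : (-oo < conjR h s)%E.
Proof. exact: lt_le_trans (ltNyr _) (conjR_ge h s 0). Qed.

Lemma conjR_fineK h s : (conjR h s < +oo)%E -> (fine (conjR h s))%:E = conjR h s.
Proof. by have := conjR_gtNy h s; case: (conjR h s). Qed.

Lemma conjR_derive1 h x : convex_fun h -> (forall x, derivable h x 1) ->
  conjR h (derive1 h x) = (derive1 h x * x - h x)%:E.
Proof.
move=> cvx dh; apply/eqP; rewrite eq_le conjR_ge andbT.
apply: ge_ereal_sup => _ [z _ <-]; rewrite lee_fin.
by have := convex_tangent_le h x z cvx dh; lra.
Qed.

Lemma conjR_ge_quadratic h gam c z : 0 < gam -> smooth_with gam^-1 h ->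
  ((z * c - h c + gam / 2 * (z - derive1 h c) ^+ 2)%:E <= conjR h z)%E.
Proof.
move=> gam0 sh; pose x := c + gam * (z - derive1 h c).
apply: le_trans (conjR_ge h z x); rewrite lee_fin.
have := smooth_descent h gam^-1 c x sh.
have -> : x - c = gam * (z - derive1 h c) by rewrite /x; ring.
have -> : gam^-1 / 2 * (gam * (z - derive1 h c)) ^+ 2 = gam / 2 * (z - derive1 h c) ^+ 2.
  by field; rewrite gt_eqF.
rewrite /x; lra.
Qed.

Lemma derive1_add_scale_surjective h L tau u : convex_fun h -> 0 < L -> smooth_with L h ->
  0 < tau -> exists c, derive1 h c + tau * c = u.
Proof.
move=> cvx L0 sh tau0; have dh := sh.1.
pose k x := derive1 h x + tau * x.
have k_cont : continuous k.
  move=> x; apply: continuousD; first exact: smooth_derive1_continuous L0 sh x.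
  exact: mulrl_continuous.
pose M := `|u - derive1 h 0| / tau.
have M0 : 0 <= M by rewrite divr_ge0 // ltW.
have tauM : tau * M = `|u - derive1 h 0| by rewrite /M mulrC divfK // gt_eqF.
have kM : u <= k M.
  have := convex_derive1_nondecreasing h 0 M cvx dh M0.
  by have := ler_norm (u - derive1 h 0); rewrite /k; lra.
have kNM : k (- M) <= u.
  have := convex_derive1_nondecreasing h (- M) 0 cvx dh; rewrite oppr_le0 => /(_ M0).
  by have := ler_norm (- (u - derive1 h 0)); rewrite normrN /k; lra.
have [|||c _ kc] := @IVT R k (- M) M u; last by exists c.
- by lra.
- by apply: continuous_subspaceT => x; exact: k_cont.
- by rewrite ge_min le_max kM kNM orbT.
Qed.

Lemma proxR_unique (h : R -> \bar R) u p hp k : 0 < k -> h p = hp%:E ->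
  (forall z, (h p + ((p - u) ^+ 2 / 2)%:E + (k * (z - p) ^+ 2)%:E <=
              h z + ((z - u) ^+ 2 / 2)%:E)%E) ->
  proxR h u = p.
Proof.
move=> k0 hpE three_point.
pose S := [set v | forall z,
  (h v + ((v - u) ^+ 2 / 2)%:E <= h z + ((z - u) ^+ 2 / 2)%:E)%E].
have q_min : S (proxR h u).
  apply: (@xgetI _ u S p) => z.
  apply: le_trans (three_point z); rewrite leeDl // lee_fin.
  by rewrite mulr_ge0 ?sqr_ge0 ?ltW.
have := le_trans (three_point (proxR h u)) (q_min p).
rewrite hpE -!EFinD lee_fin gerDl pmulr_rle0 // => sq_le0.
by apply/eqP; rewrite -subr_eq0 -sqrf_eq0 eq_le sq_le0 sqr_ge0.
Qed.

Lemma proxR_conjR_three_point h gam tau u : convex_fun h -> smooth_with gam^-1 h ->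
  0 < gam -> 0 < tau ->
  let p := proxR (fun v => (tau%:E * conjR h v)%E) u in
  (conjR h p < +oo)%E /\
  forall z, (conjR h z < +oo)%E ->
    tau * fine (conjR h p) + (p - u) ^+ 2 / 2 + (1 + gam * tau) / 2 * (z - p) ^+ 2
    <= tau * fine (conjR h z) + (z - u) ^+ 2 / 2.
Proof.
move=> cvx sh gam0 tau0 p.
(* p = h'(c) for the c solving h'(c) + tau c = u, and c is a subgradient of conjR h at p. *)
have [c uE] : exists c, derive1 h c + tau * c = u.
  by apply: derive1_add_scale_surjective cvx _ sh tau0; rewrite invr_gt0.
rewrite -{}uE in p *.
set q := derive1 h c; have conj_q := conjR_derive1 h c cvx sh.1; rewrite -/q in conj_q.
have three_point z : ((tau * (q * c - h c) + (q - (q + tau * c)) ^+ 2 / 2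
      + (1 + gam * tau) / 2 * (z - q) ^+ 2)%:E
    <= tau%:E * conjR h z + ((z - (q + tau * c)) ^+ 2 / 2)%:E)%E.
  apply: le_trans (_ : ((tau * (z * c - h c + gam / 2 * (z - q) ^+ 2)
                        + (z - (q + tau * c)) ^+ 2 / 2)%:E <= _)%E).
    by rewrite lee_fin; nra.
  by rewrite EFinD leeD2r // EFinM lee_pmul2l ?lte_fin // conjR_ge_quadratic.
have pq : p = q.
  apply: (proxR_unique _ _ _ (tau * (q * c - h c)) ((1 + gam * tau) / 2)).
  - by rewrite divr_gt0 // addr_gt0 // mulr_gt0.
  - by rewrite conj_q.
  by move=> z; rewrite conj_q -EFinM -!EFinD.
rewrite pq conj_q ltry; split=> // z zoo.
by have := three_point z; rewrite -(conjR_fineK _ _ zoo) -EFinM -EFinD lee_fin.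
Qed.
End SmoothConvex.

Section Fstar.
Context {R : realType} {n : nat} {f : 'I_n -> R -> R}.

Lemma fstar_fin {v : 'cV[R]_n} : (forall j, conjR (f j) (v j ord0) < +oo)%E ->
  fstar f v = (n%:R^-1 * \sum_j fine (conjR (f j) (v j ord0)))%:E.
Proof.
move=> fin; rewrite /fstar EFinM -sumEFin; congr (_ * _)%E.
by apply: eq_bigr => j _; rewrite conjR_fineK.
Qed.

Lemma fstar_pinfty {v : 'cV[R]_n} {j} : conjR (f j) (v j ord0) = +oo%E -> fstar f v = +oo%E.
Proof.
move=> vj; rewrite /fstar; have -> : (\sum_(i < n) conjR (f i) (v i ord0))%E = +oo%E.
  apply/esum_eqyP => [i _|]; first by rewrite gt_eqF ?conjR_gtNy.
  by exists j; rewrite mem_index_enum.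
by rewrite gt0_muley // lte_fin invr_gt0 ltr0n (leq_ltn_trans _ (ltn_ord j)).
Qed.

End Fstar.

(* Shifting the t-th index by j is a bijection of the fiber, so the t-th index is uniform on it. *)
Lemma sum_fiber_next_index (R : realType) (n T t : nat) (w : Omega n T) (F : 'I_n -> R) :
  (0 < n)%N -> (t <= T)%N ->
  \sum_(w' in fiber t w) F (w' (inord t)) = #|fiber t w|%:R / n%:R * \sum_i F i.
Proof.
case: n w F => // n' w F _ tT; set t0 : 'I_T.+1 := inord t.
have t0E : nat_of_ord t0 = t by rewrite /t0 inordK // ltnS.
pose shift j (w' : Omega n'.+1 T) : Omega n'.+1 T :=
  [ffun k => if k == t0 then w' k + j else w' k].
have shiftK j : cancel (shift j) (shift (- j)).
  by move=> w1; apply/ffunP => k; rewrite !ffunE; case: eqP => // _; rewrite addrK.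
have shift_fiber j w' : (shift j w' \in fiber t w) = (w' \in fiber t w).
  rewrite !inE; apply: eq_forallb => k; rewrite ffunE.
  by case: ifP => // /eqP ->; rewrite t0E ltnn.
have sum_shift j : \sum_(w' in fiber t w) F (w' t0 + j) = \sum_(w' in fiber t w) F (w' t0).
  rewrite [RHS](reindex_inj (can_inj (shiftK j))) /=.
  by apply: eq_big => w'; [rewrite shift_fiber | rewrite ffunE eqxx].
have double_count : (\sum_(w' in fiber t w) F (w' t0)) * n'.+1%:R =
    #|fiber t w|%:R * \sum_i F i.
  transitivity (\sum_(j < n'.+1) \sum_(w' in fiber t w) F (w' t0 + j)).
    by rewrite (eq_bigr _ (fun j _ => sum_shift j)) sumr_const card_ord mulr_natr.
  rewrite exchange_big /= mulr_natl -sumr_const; apply: eq_bigr => w' _.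
  by rewrite [in RHS](reindex_inj (addrI (w' t0))).
apply: (@mulIf _ n'.+1%:R); first by rewrite pnatr_eq0.
by rewrite double_count mulrAC divfK // pnatr_eq0.
Qed.

Section Fiber.
Context {R : realType} {n T t : nat} {w : Omega n T}.
Hypotheses (n_gt0 : (0 < n)%N) (t_le_T : (t <= T)%N).

Lemma fiber_self : w \in fiber t w.
Proof. by rewrite inE; apply/forallP => k; apply/implyP. Qed.

Lemma fiber_card_gt0 : (0 < #|fiber t w|)%N.
Proof. by apply/card_gt0P; exists w; exact: fiber_self. Qed.

Lemma condE_next_index (Z : Omega n T -> R) (F : 'I_n -> R) :
  {in fiber t w, forall w', Z w' = F (w' (inord t))} ->
  condE t Z w = n%:R^-1 * \sum_i F i.
Proof.
move=> ZF; rewrite /condE (eq_bigr _ ZF) sum_fiber_next_index //.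
have m_neq0 : #|fiber t w|%:R != 0 :> R by rewrite pnatr_eq0 -lt0n fiber_card_gt0.
have n_neq0 : n%:R != 0 :> R by rewrite pnatr_eq0 -lt0n.
by field; rewrite m_neq0 n_neq0.
Qed.

Lemma condEe_next_index (Z : Omega n T -> \bar R) (F : 'I_n -> R) :
  {in fiber t w, forall w', Z w' = (F (w' (inord t)))%:E} ->
  condEe t Z w = (n%:R^-1 * \sum_i F i)%:E.
Proof.
move=> ZF; rewrite /condEe (eq_bigr _ ZF) sumEFin -EFinM mulrC.
by rewrite -(@condE_next_index (fun w' => F (w' (inord t))) F).
Qed.

Lemma condEe_Ny (Z : Omega n T -> \bar R) :
  {in fiber t w, forall w', Z w' = -oo%E} -> condEe t Z w = -oo%E.
Proof.
move=> ZNy; rewrite /condEe (eq_bigr _ ZNy) (bigD1 w) ?fiber_self //= addNye.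
by rewrite muleC gt0_mulNye ?lte_fin ?invr_gt0 ?ltr0n ?fiber_card_gt0.
Qed.

End Fiber.

Section ColSet.
Context {R : realType} {n : nat}.
Implicit Types (v y u : 'cV[R]_n) (i : 'I_n) (a k : R).

Definition col_set v i a : 'cV[R]_n := \col_j (if j == i then a else v j 0).

Lemma sum_col_set (F : 'I_n -> R -> R) v i a :
  \sum_j F j (col_set v i a j 0) = \sum_j F j (v j 0) - F i (v i 0) + F i a.
Proof.
rewrite (bigD1 i) // [in RHS](bigD1 i) //= !mxE eqxx.
rewrite (eq_bigr (fun j => F j (v j 0))); first by ring.
by move=> j /negbTE ji; rewrite mxE ji.
Qed.

Lemma dotv_col_set v y u i a k :
  dotv (v + k *: (col_set v i a - v) - y) u = dotv (v - y) u + k * (a - v i 0) * u i 0.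
Proof.
have := sum_col_set (fun j z => (v j 0 + k * (z - v j 0) - y j 0) * u j 0) v i a.
move: (col_set v i a) => c /= sum_c; rewrite /dotv.
under eq_bigr do rewrite !mxE; rewrite sum_c.
under eq_bigr do rewrite subrr mulr0 addr0.
under [in RHS]eq_bigr do rewrite !mxE.
by ring.
Qed.

Lemma sqn_col_set v y i a :
  sqn (col_set v i a - y) = sqn (v - y) - (v i 0 - y i 0) ^+ 2 + (a - y i 0) ^+ 2.
Proof.
have := sum_col_set (fun j z => (z - y j 0) * (z - y j 0)) v i a.
move: (col_set v i a) => c /= sum_c; rewrite /sqn /dotv.
under eq_bigr do rewrite !mxE; rewrite sum_c.
by under [in RHS]eq_bigr do rewrite !mxE.
Qed.

Lemma sqn_col_set_sub v i a : sqn (col_set v i a - v) = (a - v i 0) ^+ 2.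
Proof.
rewrite sqn_col_set !subrr expr0n /= subr0 /sqn /dotv big1 ?add0r // => j _.
by rewrite mxE mul0r.
Qed.

End ColSet.

Section DualStep.
Context {R : realType} {n : nat}.
Variables (h : 'I_n -> R -> R) (gam tau : R).
Variables (v u y : 'cV[R]_n) (p : 'I_n -> R).

Definition dual_gap (i : 'I_n) : R :=
  - n%:R^-1 * dotv (v + n%:R *: (col_set v i (p i) - v) - y) u
  + n%:R * (n%:R^-1 * \sum_j h j (col_set v i (p i) j 0))
  - (n%:R - 1) * (n%:R^-1 * \sum_j h j (v j 0)) - n%:R^-1 * \sum_j h j (y j 0).

Definition dual_dist (i : 'I_n) : R :=
  (1 + (n%:R - 1) * gam * tau / n%:R) * sqn (v - y)
  - (1 + gam * tau) * sqn (col_set v i (p i) - y) - sqn (col_set v i (p i) - v).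

Hypotheses (n_gt0 : (0 < n)%N) (tau_gt0 : 0 < tau).
Hypothesis three_point : forall i,
  tau * h i (p i) + (p i - (v i 0 + tau * u i 0)) ^+ 2 / 2
    + (1 + gam * tau) / 2 * (y i 0 - p i) ^+ 2
  <= tau * h i (y i 0) + (y i 0 - (v i 0 + tau * u i 0)) ^+ 2 / 2.

Lemma dual_step_mean :
  n%:R^-1 * \sum_i dual_gap i <= (2 * tau)^-1 * (n%:R^-1 * \sum_i dual_dist i).
Proof.
have n_neq0 : n%:R != 0 :> R by rewrite pnatr_eq0 -lt0n.
set D := dotv (v - y) u; set S := sqn (v - y).
set SA := \sum_j h j (v j 0); set SC := \sum_j h j (y j 0).
have gapE i : dual_gap i = - n%:R^-1 * D - (p i - v i 0) * u i 0
    + n%:R^-1 * SA - h i (v i 0) + h i (p i) - n%:R^-1 * SC.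
  by rewrite /dual_gap dotv_col_set sum_col_set -/D -/SA -/SC; field.
have distE i : dual_dist i = - (gam * tau / n%:R) * S + (1 + gam * tau) * (v i 0 - y i 0) ^+ 2
    - (1 + gam * tau) * (p i - y i 0) ^+ 2 - (p i - v i 0) ^+ 2.
  by rewrite /dual_dist sqn_col_set sqn_col_set_sub -/S; field.
pose e i := 2 * tau * ((v - y) i 0 * u i 0) - 2 * tau * h i (v i 0)
  + 2 * tau * h i (y i 0) - gam * tau * ((v - y) i 0 * (v - y) i 0).
have sum_e : \sum_i e i = 2 * tau * D - 2 * tau * SA + 2 * tau * SC - gam * tau * S.
  by rewrite !big_split /= !sumrN -!mulr_sumr.
(* Each term is bounded by the deviation of [e i] from its mean; these deviations sum to 0. *)
have step i : 2 * tau * dual_gap i - dual_dist i <= e i - n%:R^-1 * \sum_j e j.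
  rewrite sum_e gapE distE /e !mxE; have := three_point i; nra.
have : \sum_i (2 * tau * dual_gap i - dual_dist i) <= 0.
  apply: le_trans (ler_sum _ (fun i _ => step i)) _.
  by rewrite sumrB sumr_const card_ord -[(_ * _) *+ n]mulr_natl mulrA mulfV // mul1r subrr.
rewrite sumrB -mulr_sumr subr_le0 => sum_le.
have tau2_gt0 : 0 < 2 * tau by rewrite mulr_gt0.
rewrite mulrCA ler_pM2l ?invr_gt0 ?ltr0n // -(ler_pM2l tau2_gt0).
by rewrite mulrA mulfV ?mul1r ?gt_eqF.
Qed.

End DualStep.

Section Iterates.
Context {R : realType} {n d : nat}.
Variables (A : 'M[R]_(n, d)) (f : 'I_n -> R -> R)
  (g : 'cV[R]_d -> \bar R) (eta tau : R) (beta : nat -> R)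
  (x0 : 'cV[R]_d) (y0 : 'cV[R]_n).

Local Notation state := (sdapd_state A f g eta tau beta x0 y0).
Local Notation Y := (y_it A f g eta tau beta x0 y0).
Local Notation Xbar := (xbar_it A f g eta tau beta x0 y0).

Definition prox_coord (v u : 'cV[R]_n) (i : 'I_n) : R :=
  proxR (fun z => (tau%:E * conjR (f i) z)%E) (v i 0 + tau * u i 0).

Lemma sdapd_state_ext s s' t : (forall k, (k < t)%N -> s k = s' k) -> state s t = state s' t.
Proof.
elim: t => [//|t IH] same /=.
by rewrite IH ?same // => k kt; apply: same; exact: ltnW.
Qed.

Lemma sdapd_state_fiber {T t} {w w' : Omega n T} : (t <= T)%N -> w' \in fiber t w ->
  state (idx_seq w') t = state (idx_seq w) t.
Proof.
move=> tT /[1!inE] /forallP same; apply: sdapd_state_ext => k kt.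
have kT : (k < T.+1)%N by rewrite ltnS (leq_trans (ltnW kt)).
by have /implyP := same (inord k); rewrite inordK // kt => /(_ isT) /eqP.
Qed.

Lemma y_it_succ s t :
  Y s t.+1 = col_set (Y s t) (s t) (prox_coord (Y s t) (A *m Xbar s t) (s t)).
Proof.
rewrite /xbar_it /x_it /y_it /=; case: (state s t) => [[x v] S] /=.
apply/matrixP => i j; rewrite !mxE /prox_coord; case: eqP => // _; rewrite !mxE.
by under eq_bigr do rewrite mxE.
Qed.

Lemma sdapd_fiber_step {T t} {w w' : Omega n T} : (t <= T)%N -> w' \in fiber t w ->
  let v := Y (idx_seq w) t in let u := A *m Xbar (idx_seq w) t in
  [/\ Y (idx_seq w') t = v, Xbar (idx_seq w') t = Xbar (idx_seq w) t &
       Y (idx_seq w') t.+1 = col_set v (w' (inord t)) (prox_coord v u (w' (inord t)))].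
Proof.
by move=> tT /(sdapd_state_fiber tT) same; rewrite y_it_succ /xbar_it /x_it /y_it same.
Qed.

Lemma conjR_y_it_lt_pinfty gam : 0 < gam -> 0 < tau ->
  (forall i, convex_fun (f i)) -> (forall i, smooth_with gam^-1 (f i)) ->
  (forall i, conjR (f i) (y0 i ord0) < +oo)%E ->
  forall s t j, (conjR (f j) (Y s t j ord0) < +oo)%E.
Proof.
move=> gam_gt0 tau_gt0 cvx sm y0_dom s; elim=> [//|t IH] j.
rewrite y_it_succ mxE; case: eqP => [->|_]; last exact: IH.
exact: (proxR_conjR_three_point _ _ _ _ (cvx _) (sm _) gam_gt0 tau_gt0).1.
Qed.

End Iterates.

Theorem lemma3p4 (R : realType) (n d : nat) (A : 'M[R]_(n, d))
  (f : 'I_n -> R -> R) (g : 'cV[R]_d -> \bar R)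
  (gamma mu eta tau : R) (beta : nat -> R)
  (x0 : 'cV[R]_d) (y0 : 'cV[R]_n) (T t : nat) :
  (0 < n)%N ->
  0 < gamma -> 0 < mu -> 0 < eta -> 0 < tau -> (forall k, 0 < beta k) ->
  (forall i, convex_fun (f i)) ->
  (forall i, smooth_with (gamma^-1) (f i)) ->
  (* g : R^d -> R \cup {+oo}, proper, closed, mu-strongly convex *)
  (forall x, g x != -oo%E) ->
  (exists x, (g x < +oo)%E) ->
  (forall c : R, closed [set x | (g x <= c%:E)%E]) ->
  (forall (x y : 'cV[R]_d) (l : R), 0 < l < 1 ->
     (g (l *: x + (1 - l) *: y)%R <=
      l%:E * g x + (1 - l)%:E * g y - (mu / 2 * l * (1 - l) * sqn (x - y))%:E)%E) ->
  (* y^0 in dom f^* (needed for the expression to be well defined) *)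
  (forall i, (conjR (f i) (y0 i ord0) < +oo)%E) ->
  (t <= T)%N ->
  forall (y : 'cV[R]_n) (w : Omega n T),
  let s := idx_seq w in
  let Y := y_it A f g eta tau beta x0 y0 in
  (condEe t (fun w' =>
      let s' := idx_seq w' in
      ((- (n%:R)^-1 * dotv (ybar_it A f g eta tau beta x0 y0 s' t - y)
                          (A *m xbar_it A f g eta tau beta x0 y0 s' t))%:E
       + n%:R%:E * fstar f (Y s' t.+1)
       - (n%:R - 1)%:E * fstar f (Y s' t)
       - fstar f y)%E) w
   <=
   ((2 * tau)^-1 * condE t (fun w' =>
      let s' := idx_seq w' in
      (1 + (n%:R - 1) * gamma * tau / n%:R) * sqn (Y s' t - y)
      - (1 + gamma * tau) * sqn (Y s' t.+1 - y)
      - sqn (Y s' t.+1 - Y s' t)) w)%:E)%E.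
Proof.
move=> n_gt0 gam_gt0 _ _ tau_gt0 _ cvx sm _ _ _ _ y0_dom tT y w; cbv zeta.
have dom_Y := conjR_y_it_lt_pinfty A f g eta tau beta x0 y0 _ gam_gt0 tau_gt0 cvx sm y0_dom.
set yt := y_it A f g eta tau beta x0 y0 (idx_seq w) t.
set xb := xbar_it A f g eta tau beta x0 y0 (idx_seq w) t.
set p := prox_coord f tau yt (A *m xb).
have [dom_y|/existsNP[j /negP]] := pselect (forall j, conjR (f j) (y j ord0) < +oo)%E; last first.
  rewrite ltey negbK => /eqP yj; rewrite condEe_Ny ?leNye // => w' _.
  by rewrite (fstar_pinfty yj) (fstar_fin (dom_Y _ t.+1)) (fstar_fin (dom_Y _ t)).
pose h j z := fine (conjR (f j) z).
rewrite (condEe_next_index n_gt0 tT _ (dual_gap h yt (A *m xb) y p)); last first.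
  move=> w' /(sdapd_fiber_step A f g eta tau beta x0 y0 tT) [Yt Xt Yt1].
  rewrite (fstar_fin (dom_Y _ t.+1)) (fstar_fin (dom_Y _ t)) (fstar_fin dom_y).
  by rewrite /ybar_it Yt Xt Yt1 -!EFinM -!EFinN -!EFinD.
rewrite (condE_next_index n_gt0 tT _ (dual_dist gamma tau yt y p)); last first.
  by move=> w' /(sdapd_fiber_step A f g eta tau beta x0 y0 tT) [-> _ ->].
rewrite lee_fin; apply: dual_step_mean => // i.
exact: (proxR_conjR_three_point _ _ _ _ (cvx i) (sm i) gam_gt0 tau_gt0).2.
Qed.
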